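(* Let $n=3$. (i) For every $k\ge1$ and $i\in\{1,2,3\}$ there exist constants $c_{3,k,i}$ and $C_{3,k,i}$ such that for every $w\in H_{3,k,i}$, $$Q_{V_3}(w)=c_{3,k,i}\,\mathrm{Av}(|\nabla_T w|^2),\qquad Q_3(w)=C_{3,k,i}\,\mathrm{Av}(|\nabla_T w|^2).$$ (ii) For all $k,l\ge1$ and $i,j\in\{1,2,3\}$ with $(k,i)\ne(l,j)$, and all $w_{k,i}\in H_{3,k,i}$, $w_{l,j}\in H_{3,l,j}$, one has $Q_{V_3}(w_{k,i},w_{l,j})=0$ and $Q_3(w_{k,i},w_{l,j})=0$.
   Context: $\mathbb S^2\subset\mathbb R^3$ unit sphere, $B_1$ unit ball; $\mathrm{Av}(f):=\frac{1}{\mathcal H^2(\mathbb S^2)}\int_{\mathbb S^2}f\,d\mathcal H^2$. $\{\tau_1,\tau_2\}$ local orthonormal tangent frame; $\nabla_T w$ tangential gradient ($3\times2$ matrix with entries $\partial_{\tau_j}w^i$), $\nabla_T w^j$ tangential gradient vector of the $j$-th component, $\mathrm{div}_{\mathbb S^2}w:=\sum_i\langle\partial_{\tau_i}w,\tau_i\rangle$, $|\cdot|$ Frobenius norm; $w_h$ componentwise harmonic extension to $\overline{B_1}$. $H_3:=\{w\in W^{1,2}(\mathbb S^2;\mathbb R^3):\mathrm{Av}(w)=0,\mathrm{Av}(\langle w,x\rangle)=0\}$; $A(w):=(\mathrm{div}_{\mathbb S^2}w)x-\sum_{j=1}^3x_j\nabla_T w^j$. Bilinear forms: $Q_{V_3}(v,w):=\frac32\mathrm{Av}(\langle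 v,A(w)\rangle)$, $Q_3(v,w):=\frac34\mathrm{Av}(\nabla_T v:\nabla_T w)-Q_{V_3}(v,w)$, with $Q_{V_3}(w)=Q_{V_3}(w,w)$, $Q_3(w)=Q_3(w,w)$. For $k\ge1$: $H_{3,k}$ is the subspace of $H_3$ of maps whose components are $k$-th order spherical harmonics; $H_{3,k,\mathrm{sol}}:=\{w\in H_{3,k}:\mathrm{div}\,w_h\equiv0\text{ in }B_1\}$; $H_{3,k,1}:=\{w\in H_{3,k,\mathrm{sol}}:A(w)=-kw\}$, $H_{3,k,2}:=\{w\in H_{3,k,\mathrm{sol}}:A(w)=w\}$, and $H_{3,k,3}$ is the $W^{1,2}$-orthogonal complement of $H_{3,k,\mathrm{sol}}$ in $H_{3,k}$. *)

From HB Require Import structures.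
From mathcomp Require Import all_boot all_order all_algebra.
From mathcomp Require Import mpoly.
From mathcomp Require Import all_classical all_reals all_analysis.
Set Implicit Arguments. Unset Strict Implicit. Unset Printing Implicit Defensive.
Import Order.TTheory GRing.Theory Num.Theory.
Import numFieldNormedType.Exports.
Local Open Scope classical_set_scope.
Local Open Scope ring_scope.

Notation poly3 R := (mpoly.mpoly 3 R).
(* A map S^2 -> R^3 given by three polynomial components. *)
Definition vfield (R : realType) := 'I_3 -> poly3 R.
Definition pt (R : realType) := 'I_3 -> R.

Section Defs.
Variable R : realType.

Definition ev (p : poly3 R) (x : pt R) : R := mpoly.meval x p.
Definition d (j : 'I_3) (p : poly3 R) : poly3 R := mpoly.mderiv j p.
Definition dot (u v : pt R) : R := \sum_(i < 3) u i * v i.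

Definition on_sphere (x : pt R) : Prop := dot x x = 1.
Definition in_open_ball (x : pt R) : Prop := dot x x < 1.

Definition homog_deg (k : nat) (p : poly3 R) : Prop :=
  forall m : mpoly.multinom 3, mpoly.mcoeff m p != 0 -> mpoly.mdeg m = k.
Definition lap (p : poly3 R) : poly3 R := \sum_(i < 3) d i (d i p).

(* p restricted to S^2 is a k-th order spherical harmonic:
   p is a homogeneous harmonic polynomial of degree k *)
Definition sph_harm (k : nat) (p : poly3 R) : Prop := homog_deg k p /\ lap p = 0.

Definition sph (t f : R) : pt R := fun i =>
  match val i with
  | 0 => sin t * cos f
  | 1 => sin t * sin f
  | _ => cos t
  end.

(* integral over S^2 w.r.t. H^2 (via spherical coordinates) *)
Definition sint (g : pt R -> R) : R :=
  Rintegral lebesgue_measure `[0, 2 * pi]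
    (fun f => Rintegral lebesgue_measure `[0, pi]
       (fun t => g (sph t f) * sin t)).

Definition Av (g : pt R -> R) : R := sint g / sint (fun _ => 1).

Definition grad (p : poly3 R) (x : pt R) : pt R := fun j => ev (d j p) x.
Definition gradT (p : poly3 R) (x : pt R) : pt R :=
  fun j => grad p x j - dot x (grad p x) * x j.

Definition evv (w : vfield R) (x : pt R) : pt R := fun i => ev (w i) x.

Definition gradT_dot (v w : vfield R) (x : pt R) : R :=
  \sum_(i < 3) dot (gradT (v i) x) (gradT (w i) x).

(* div_{S^2} w = sum_a <d_{tau_a} w, tau_a> = tr(P Dw P), P = I - x x^T *)
Definition divS (w : vfield R) (x : pt R) : R :=
  \sum_(i < 3) \sum_(j < 3)
    ((i == j)%:R - x i * x j) * ev (d j (w i)) x.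

Definition Aop (w : vfield R) (x : pt R) : pt R :=
  fun l => divS w x * x l - \sum_(j < 3) x j * gradT (w j) x l.

Definition QV3 (v w : vfield R) : R :=
  3 / 2 * Av (fun x => dot (evv v x) (Aop w x)).

Definition Q3 (v w : vfield R) : R :=
  3 / 4 * Av (gradT_dot v w) - QV3 v w.

(* W^{1,2}(S^2;R^3) inner product (normalised by 1/H^2(S^2)) *)
Definition W12 (v w : vfield R) : R :=
  Av (fun x => dot (evv v x) (evv w x)) + Av (gradT_dot v w).

Definition H3k (k : nat) (w : vfield R) : Prop :=
  (forall i, sph_harm k (w i)) /\
  (forall i, Av (fun x => ev (w i) x) = 0) /\
  Av (fun x => dot (evv w x) x) = 0.

(* H_{3,k,sol}; for components that are homogeneous harmonic polynomials,
   the componentwise harmonic extension w_h to the closed ball is w itself *)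
Definition H3k_sol (k : nat) (w : vfield R) : Prop :=
  H3k k w /\
  forall x, in_open_ball x -> \sum_(i < 3) ev (d i (w i)) x = 0.

Definition H3ki (k i : nat) (w : vfield R) : Prop :=
  match i with
  | 1 => H3k_sol k w /\ forall x, on_sphere x ->
           Aop w x = (fun l => - (k%:R) * evv w x l)
  | 2 => H3k_sol k w /\ forall x, on_sphere x -> Aop w x = evv w x
  | 3 => H3k k w /\ forall v, H3k_sol k v -> W12 v w = 0
  | _ => False
  end.

End Defs.

From HB Require Import structures.
From mathcomp Require Import all_boot all_order all_algebra.
From mathcomp Require Import mpoly ssrcomplements.
From mathcomp Require Import all_classical all_reals all_analysis.
From mathcomp Require Import ring lra zify.
Import Order.TTheory GRing.Theory Num.Theory.
Import numFieldNormedType.Exports.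
Local Open Scope classical_set_scope.
Local Open Scope ring_scope.

Set Implicit Arguments.
Unset Strict Implicit.
Unset Printing Implicit Defensive.

(* Everything reduces to integrals of polynomials over S^2.  In spherical
   coordinates the integral of a monomial x^m splits into two sine-cosine
   moments, whose reduction formulas give (|m| + 2) Int x^(m + e_i) =
   m_i Int x^(m - e_i), i.e. Int d_i p = (k + 2) Int x_i p for p homogeneous of
   degree k.  Hence Int grad q . grad p = k (k + l + 1) Int q p when p is
   harmonic of degree k and q homogeneous of degree l: spherical harmonics of
   different degrees are orthogonal, and on H_{3,k} the Dirichlet form
   Int grad_T v : grad_T w equals k (k + 1) Int v . w.  The same formula shows
   that A is symmetric on k-homogeneous fields.  Moreover A preserves H_{3,k}
   and multiplies the divergence by k + 1, so for w orthogonal to H_{3,k,sol}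
   the field A w - (k + 1) w is solenoidal, hence orthogonal to w.  Thus
   Int w . A w = lam_i Int |w|^2 on H_{3,k,i} with lam = -k, 1, k + 1, giving
   c_{3,k,i} = 3 lam_i / (2 k (k + 1)) and C_{3,k,i} = 3/4 - c_{3,k,i}; the
   orthogonality relations follow from the symmetry of A and the distinct
   eigenvalues. *)

Section EulerLaplace.
Variables (n : nat) (R : comNzRingType).
Implicit Types (p q : {mpoly R[n]}) (m : 'X_{1..n}).

Definition meuler p : {mpoly R[n]} := \sum_j 'X_j * p^`M(j).

Definition mlap p : {mpoly R[n]} := \sum_j p^`M(j)^`M(j).

Definition mgrad_dot p q : {mpoly R[n]} := \sum_j p^`M(j) * q^`M(j).

Lemma mgrad_dotC p q : mgrad_dot p q = mgrad_dot q p.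
Proof. by apply: eq_bigr => j _; rewrite mulrC. Qed.

Lemma meuler_is_linear : linear meuler.
Proof.
move=> c p q; rewrite /meuler scaler_sumr -big_split; apply: eq_bigr => j _.
by rewrite mderivD mderivZ mulrDr scalerAr.
Qed.

HB.instance Definition _ := GRing.isLinear.Build R {mpoly R[n]} {mpoly R[n]}
  _ meuler meuler_is_linear.

Lemma mlap_is_linear : linear mlap.
Proof.
move=> c p q; rewrite /mlap scaler_sumr -big_split; apply: eq_bigr => j _.
by rewrite !mderivD !mderivZ.
Qed.

HB.instance Definition _ := GRing.isLinear.Build R {mpoly R[n]} {mpoly R[n]}
  _ mlap mlap_is_linear.

Lemma mderivXU i j : ('X_i : {mpoly R[n]})^`M(j) = (i == j)%:R.
Proof.
rewrite mderivX mnm1E; case: eqP => [<-|_]; last by rewrite scale0r.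
have -> : (U_(i) - U_(i))%MM = 0%MM by apply/mnmP => l; rewrite mnmBE subnn mnm0E.
by rewrite mpolyX0 scale1r.
Qed.

Lemma mderivXUM i j p : ('X_i * p)^`M(j) = (i == j)%:R *: p + 'X_i * p^`M(j).
Proof. by rewrite mderivM mderivXU scaler_nat mulr_natl. Qed.

Lemma sum_delta_scale (F : 'I_n -> {mpoly R[n]}) i :
  \sum_j (i == j)%:R *: F j = F i.
Proof.
rewrite (bigD1 i) //= eqxx scale1r big1 ?addr0 // => j ji.
by rewrite eq_sym (negbTE ji) scale0r.
Qed.

Lemma meulerX m : meuler 'X_[m] = (mdeg m)%:R *: 'X_[m].
Proof.
rewrite /meuler mdegE natr_sum scaler_suml; apply: eq_bigr => j _.
rewrite mderivX -scalerAr; have [->|mj] := eqVneq (m j) 0%N; first by rewrite !scale0r.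
congr (_ *: _); rewrite -mpolyXD addmC submK //.
by apply/mnm_lepP => l; rewrite mnm1E; case: eqP => // <-; rewrite lt0n.
Qed.

Lemma meuler_dhomog k p : p \is k.-homog -> meuler p = k%:R *: p.
Proof.
move=> /dhomogP hp; rewrite {1}(mpolyE p) linear_sum [in RHS](mpolyE p) scaler_sumr.
rewrite !big_seq; apply: eq_bigr => m mp.
by rewrite linearZ /= meulerX (hp m mp) scalerA mulrC -scalerA.
Qed.

Lemma dhomog_mderiv k i p : p \is k.-homog -> p^`M(i) \is k.-1.-homog.
Proof.
move=> /dhomogP hp; rewrite /mderiv big_seq rpred_sum // => m mp.
have [->|mi] := eqVneq (m i) 0%N; first by rewrite mul0r scale0r rpred0.
rewrite rpredZ // dhomogX -(hp m mp).
have le : (U_(i) <= m)%MM.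
  by apply/mnm_lepP => l; rewrite mnm1E; case: eqP => // <-; rewrite lt0n.
apply/eqP; have := mdegD (m - U_(i)) U_(i).
rewrite submK // mdeg1 addn1 => e.
by change (mdeg (m - U_(i)) = (mdeg m).-1); rewrite e.
Qed.

Lemma dhomogXU i : ('X_i : {mpoly R[n]}) \is 1.-homog.
Proof. by rewrite dhomogX; apply/eqP; exact: mdeg1. Qed.

Lemma dhomogXUM k i p : p \is k.-homog -> 'X_i * p \is k.+1.-homog.
Proof. by move=> hp; have := dhomogM (dhomogXU i) hp; rewrite add1n. Qed.

Lemma mlap_mderiv i p : mlap p^`M(i) = (mlap p)^`M(i).
Proof. by rewrite /mlap linear_sum; apply: eq_bigr => j _; rewrite !(mderiv_comm i j). Qed.

Lemma mlapXUM i p : mlap ('X_i * p) = 2%:R *: p^`M(i) + 'X_i * mlap p.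
Proof.
rewrite /mlap; under eq_bigr => j _ do rewrite mderivXUM mderivD mderivZ mderivXUM.
by rewrite !big_split /= !sum_delta_scale -mulr_sumr scaler_nat mulr2n addrA.
Qed.

Lemma mlap1 : mlap 1 = 0.
Proof. by rewrite /mlap big1 // => i _; rewrite -mpolyC1 mderivC raddf0. Qed.

End EulerLaplace.

Section SinCosMoments.
Variable R : realType.
Local Notation mu := (@lebesgue_measure R).
Implicit Types (F f g : R -> R) (a b L : R).

Lemma continuous_is_derive F f :
  (forall x, is_derive x (1 : R) F (f x)) -> continuous F.
Proof.
move=> dF x; apply: differentiable_continuous.
by have /derivable1_diffP := @ex_derive R R^o R^o x 1 F (f x) (dF x).
Qed.

Lemma Rintegral_is_derive F f a b : a < b -> continuous f ->
  (forall x, is_derive x (1 : R) F (f x)) -> Rintegral mu `[a, b] f = F b - F a.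
Proof.
move=> ab cf dF; have cF := continuous_is_derive dF.
rewrite /Rintegral (@continuous_FTC2 _ f F a b ab) -?EFinB //.
- exact: continuous_subspaceT.
- split; first by move=> x _; exact: (@ex_derive R R^o R^o x 1 F (f x) (dF x)).
  + exact: cvg_at_right_filter (cF a).
  + exact: cvg_at_left_filter (cF b).
- by move=> x _; rewrite derive1E; exact: derive_val.
Qed.

Lemma continuous_integrable_itv g a b : continuous g ->
  mu.-integrable `[a, b] (EFin \o g).
Proof.
move=> cg; apply: continuous_compact_integrable; first exact: segment_compact.
exact: continuous_subspaceT.
Qed.

Lemma Rintegral_sum_scale (I : Type) (s : seq I) (c : I -> R) (G : I -> R -> R) a b :
  (forall i, continuous (G i)) ->
  Rintegral mu `[a, b] (fun x => \sum_(i <- s) c i * G i x) =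
  \sum_(i <- s) c i * Rintegral mu `[a, b] (G i).
Proof.
move=> cG; have cZ i : continuous (fun x => c i * G i x).
  by move=> x; apply: cvgM; [exact: cvg_cst|exact: cG].
have sum_cons i t : (fun x => \sum_(j <- i :: t) c j * G j x) =
    (fun x => c i * G i x + \sum_(j <- t) c j * G j x).
  by apply/funext => x; rewrite big_cons.
have sum_nil : (fun x => \sum_(j <- [::]) c j * G j x) = (fun=> 0 * 0).
  by apply/funext => x; rewrite big_nil mul0r.
have cS t : continuous (fun x => \sum_(j <- t) c j * G j x).
  elim: t => [|i t IH] x; first by rewrite sum_nil; exact: cvg_cst.
  by rewrite sum_cons; exact: cvgD (cZ i x) (IH x).
elim: s => [|i s IH].
  by rewrite sum_nil big_nil RintegralZl ?mul0r //; apply: continuous_integrable_itv => x;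
    exact: cvg_cst.
rewrite sum_cons big_cons -IH RintegralD //; try exact: continuous_integrable_itv.
by rewrite RintegralZl //; exact: continuous_integrable_itv.
Qed.

Lemma is_derive_sin_cos_pow (p q : nat) x :
  is_derive x (1 : R) (fun t => sin t ^+ p * cos t ^+ q)
    (p%:R * (sin x ^+ p.-1 * cos x ^+ q.+1) - q%:R * (sin x ^+ p.+1 * cos x ^+ q.-1)).
Proof.
have := is_deriveM (is_deriveX p (is_derive_sin x)) (is_deriveX q (is_derive_cos x)).
rewrite (_ : (sin ^+ p * cos ^+ q)%R = (fun t => sin t ^+ p * cos t ^+ q)).
  move=> D; apply: is_derive_eq D _; rewrite /= !exprfctE /=.
  by case: p => [|p]; case: q => [|q] /=;
    rewrite ?mul0r ?mulr0 ?expr0 ?(exprS (sin x)) ?(exprS (cos x)) /GRing.scale /=; ring.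
by apply/funext => t; rewrite /= !exprfctE.
Qed.

Lemma continuous_sin_cos_pow (p q : nat) :
  continuous (fun t : R => sin t ^+ p * cos t ^+ q).
Proof. exact: continuous_is_derive (@is_derive_sin_cos_pow p q). Qed.

Definition sincos_moment L (p q : nat) : R :=
  Rintegral mu `[0, L] (fun t => sin t ^+ p * cos t ^+ q).

Lemma sincos_moment_lin L (c1 c2 : R) (p1 q1 p2 q2 : nat) :
  Rintegral mu `[0, L]
    (fun t => c1 * (sin t ^+ p1 * cos t ^+ q1) + c2 * (sin t ^+ p2 * cos t ^+ q2))
  = c1 * sincos_moment L p1 q1 + c2 * sincos_moment L p2 q2.
Proof.
have cZ c p q : continuous (fun t : R => c * (sin t ^+ p * cos t ^+ q)).
  by move=> x; apply: cvgM; [exact: cvg_cst|exact: continuous_sin_cos_pow].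
rewrite RintegralD //; try exact: continuous_integrable_itv.
by rewrite !RintegralZl //; exact/continuous_integrable_itv/continuous_sin_cos_pow.
Qed.

Lemma sincos_moment_pythagoras L (p q : nat) :
  sincos_moment L p.+2 q + sincos_moment L p q.+2 = sincos_moment L p q.
Proof.
rewrite -[sincos_moment L p.+2 q]mul1r -[sincos_moment L p q.+2]mul1r.
rewrite -sincos_moment_lin /sincos_moment.
by apply: eq_Rintegral => t _; rewrite !mul1r -[RHS]mulr1 -(cos2Dsin2 t) !exprS; ring.
Qed.

Lemma sincos_moment_parts L (p q : nat) : 0 < L ->
  p%:R * sincos_moment L p.-1 q.+1 - q%:R * sincos_moment L p.+1 q.-1
  = sin L ^+ p * cos L ^+ q - (p == 0%N)%:R.
Proof.
move=> L0; rewrite -mulNr -sincos_moment_lin.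
under eq_Rintegral => x _ do rewrite mulNr.
rewrite (Rintegral_is_derive L0 _ (@is_derive_sin_cos_pow p q)).
  by rewrite sin0 cos0 expr1n mulr1 expr0n.
move=> x; apply: cvgB; apply: cvgM; try exact: cvg_cst; exact: continuous_sin_cos_pow.
Qed.

Variable L : R.
Hypotheses (L_gt0 : 0 < L) (sinL : sin L = 0).

Lemma sincos_moment_cos1 (p : nat) : sincos_moment L p 1 = 0.
Proof.
have := sincos_moment_parts p.+1 0 L_gt0.
rewrite sinL expr0n /= !mul0r subr0 subrr => /eqP.
by rewrite mulf_eq0 pnatr_eq0 => /eqP.
Qed.

Lemma sincos_moment_sin1 (q : nat) : cos L = 1 -> sincos_moment L 1 q = 0.
Proof.
move=> cosL; have := sincos_moment_parts 0 q.+1 L_gt0.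
rewrite cosL expr1n expr0 mulr1 subrr mul0r sub0r => /eqP.
by rewrite oppr_eq0 mulf_eq0 pnatr_eq0 /= => /eqP.
Qed.

Lemma sincos_moment_swap (p q : nat) :
  p.+1%:R * sincos_moment L p q.+2 = q.+1%:R * sincos_moment L p.+2 q.
Proof.
by apply/eqP; rewrite -subr_eq0 (sincos_moment_parts p.+1 q.+1 L_gt0) sinL expr0n /= !mul0r subrr.
Qed.

Lemma sincos_moment_rec_cos (p q : nat) :
  (p + q + 2)%:R * sincos_moment L p q.+2 = q.+1%:R * sincos_moment L p q.
Proof.
rewrite -(sincos_moment_pythagoras L p q) mulrDr -sincos_moment_swap.
by rewrite -(addn1 p) -(addn1 q) !natrD; ring.
Qed.

Lemma sincos_moment_rec_sin (p q : nat) :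
  (p + q + 2)%:R * sincos_moment L p.+2 q = p.+1%:R * sincos_moment L p q.
Proof.
rewrite -(sincos_moment_pythagoras L p q) mulrDr sincos_moment_swap.
by rewrite -(addn1 p) -(addn1 q) !natrD; ring.
Qed.

End SinCosMoments.

Local Notation i0 := (@ord0 2).
Local Notation i1 := (@lift 3 ord0 (@ord0 1)).
Local Notation i2 := (@lift 3 ord0 (@lift 2 ord0 (@ord0 0))).

Section SphereIntegral.
Variable R : realType.
Local Notation P := (poly3 R).
Implicit Types (p q : P) (m : 'X_{1..3}).

Local Notation J2 := (sincos_moment (2 * pi)).
Local Notation Jpi := (sincos_moment pi).

(* The integral of x_0^a x_1^b x_2^c over S^2 in the coordinates of [sph]. *)
Definition sph_moment (a b c : nat) : R := J2 b a * Jpi (a + b).+1 c.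

Definition sph_int_monomial m : R := sph_moment (m i0) (m i1) (m i2).

Let twopi_gt0 : 0 < 2 * pi :> R. Proof. by rewrite mulr_gt0 // pi_gt0. Qed.
Let sin_twopi : sin (2 * pi) = 0 :> R. Proof. by rewrite mulr_natl sin2pi. Qed.
Let cos_twopi : cos (2 * pi) = 1 :> R. Proof. by rewrite mulr_natl cos2pi. Qed.

Lemma sph_moment_rec0 a b c :
  (a + b + c + 2)%:R * sph_moment a.+1 b c = a%:R * sph_moment a.-1 b c.
Proof.
case: a => [|a].
  by rewrite /sph_moment (sincos_moment_cos1 twopi_gt0 sin_twopi) !mul0r !mulr0.
have eJ2 := sincos_moment_rec_cos twopi_gt0 sin_twopi b a.
have eJpi := sincos_moment_rec_sin (pi_gt0 R) (sinpi R) (a + b).+1 c.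
rewrite /sph_moment /= (_ : (a.+2 + b).+1 = (a + b).+3)%N; last lia.
rewrite mulrCA (_ : (a.+1 + b + c + 2)%:R = ((a + b).+1 + c + 2)%:R :> R); last by congr _%:R; lia.
rewrite eJpi mulrCA mulrA (_ : (a + b).+2 = b + a + 2)%N; last lia.
by rewrite eJ2 mulrA.
Qed.

Lemma sph_moment_rec1 a b c :
  (a + b + c + 2)%:R * sph_moment a b.+1 c = b%:R * sph_moment a b.-1 c.
Proof.
case: b => [|b].
  by rewrite /sph_moment (sincos_moment_sin1 twopi_gt0 _ cos_twopi) !mul0r !mulr0.
have eJ2 := sincos_moment_rec_sin twopi_gt0 sin_twopi b a.
have eJpi := sincos_moment_rec_sin (pi_gt0 R) (sinpi R) (a + b).+1 c.
rewrite /sph_moment /= (_ : (a + b.+2).+1 = (a + b).+3)%N; last lia.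
rewrite mulrCA (_ : (a + b.+1 + c + 2)%:R = ((a + b).+1 + c + 2)%:R :> R); last by congr _%:R; lia.
rewrite eJpi mulrCA mulrA (_ : (a + b).+2 = b + a + 2)%N; last lia.
by rewrite eJ2 mulrA.
Qed.

Lemma sph_moment_rec2 a b c :
  (a + b + c + 2)%:R * sph_moment a b c.+1 = c%:R * sph_moment a b c.-1.
Proof.
case: c => [|c].
  by rewrite /sph_moment (sincos_moment_cos1 (pi_gt0 R) (sinpi R)) !mul0r !mulr0.
have eJpi := sincos_moment_rec_cos (pi_gt0 R) (sinpi R) (a + b).+1 c.
rewrite /sph_moment mulrCA (_ : (a + b + c.+1 + 2)%:R = ((a + b).+1 + c + 2)%:R :> R).
  by rewrite eJpi mulrCA.
by congr _%:R; lia.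
Qed.

Definition sph_int p : R := \sum_(m <- msupp p) p@_m * sph_int_monomial m.

Lemma sph_intE p k : (msize p <= k)%N ->
  sph_int p = \sum_(m : 'X_{1..3 < k}) p@_m * sph_int_monomial m.
Proof.
move=> le_pk; rewrite /sph_int (big_mksub 'X_{1..3 < k}) ?msupp_uniq //=; last first.
  by move=> x /msize_mdeg_lt /leq_trans; apply.
by rewrite big_rmcond //= => j /memN_msupp_eq0 ->; rewrite mul0r.
Qed.

Lemma sph_int_is_linear : linear_for *%R sph_int.
Proof.
move=> c p q; pose k := maxn (msize (c *: p + q)) (maxn (msize p) (msize q)).
rewrite !(@sph_intE _ k) ?mulr_sumr -?big_split /=; try by rewrite /k; lia.
by apply: eq_bigr => m _; rewrite mcoeffD mcoeffZ; ring.
Qed.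

HB.instance Definition _ := GRing.isLinear.Build R P R _ sph_int sph_int_is_linear.

Lemma sph_intZ c p : sph_int (c *: p) = c * sph_int p.
Proof. exact: linearZ. Qed.

Lemma sph_intX m : sph_int 'X_[m] = sph_int_monomial m.
Proof. by rewrite /sph_int msuppX big_seq1 mcoeffX eqxx mul1r. Qed.

Lemma sint_ev p : sint (ev p) = sph_int p.
Proof.
rewrite /sint (_ : (fun f => _) = (fun f => \sum_(m <- msupp p)
    (p@_m * sincos_moment pi (m i0 + m i1).+1 (m i2)) * (sin f ^+ m i1 * cos f ^+ m i0))).
  rewrite Rintegral_sum_scale; last by move=> m; exact: continuous_sin_cos_pow.
  by apply: eq_bigr => m _; rewrite /sph_int_monomial /sph_moment /sincos_moment; ring.
apply/funext => f.
rewrite (_ : (fun t => _) = (fun t => \sum_(m <- msupp p)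
    (p@_m * (sin f ^+ m i1 * cos f ^+ m i0)) *
    (sin t ^+ (m i0 + m i1).+1 * cos t ^+ m i2))).
  rewrite Rintegral_sum_scale; last by move=> m; exact: continuous_sin_cos_pow.
  by apply: eq_bigr => m _; rewrite /sincos_moment; ring.
apply/funext => t; rewrite /ev mevalE big_distrl /=; apply: eq_bigr => m _.
by rewrite !big_ord_recl big_ord0 /sph /= !exprMn exprS exprD; ring.
Qed.

Lemma sph_int_monomial_rec m i :
  (mdeg m + 2)%:R * sph_int_monomial (m + U_(i)) = (m i)%:R * sph_int_monomial (m - U_(i)).
Proof.
rewrite /sph_int_monomial !mnmDE !mnmBE !mnm1E mdegE !big_ord_recl big_ord0 addn0 addnA.
have [->|[->|->]] : i = i0 \/ i = i1 \/ i = i2.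
- by case: i => [[|[|[|//]]] ?]; [left|right; left|right; right]; exact: val_inj.
- by rewrite /= !addn0 !subn0 addn1 subn1; exact: sph_moment_rec0.
- by rewrite /= !addn0 !subn0 addn1 subn1; exact: sph_moment_rec1.
- by rewrite /= !addn0 !subn0 addn1 subn1; exact: sph_moment_rec2.
Qed.

(* Int grad_T f = 2 Int x f on S^2 and x . grad p = k p: hence the factor k + 2. *)
Lemma sph_int_mderiv k i p : p \is k.-homog ->
  sph_int p^`M(i) = (k + 2)%:R * sph_int ('X_i * p).
Proof.
move=> /dhomogP hp; rewrite [in LHS](mpolyE p) [in RHS](mpolyE p).
rewrite [X in _ * sph_int X]mulr_sumr (raddf_sum (mderiv i)) !(raddf_sum sph_int).
rewrite mulr_sumr !big_seq.
apply: eq_bigr => m mp /=.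
rewrite linearZ /= mderivX -scalerAr !linearZ /= -mpolyXD addmC !sph_intX -(hp m mp).
by rewrite [RHS]mulrCA sph_int_monomial_rec.
Qed.

Lemma sph_int1 : sph_int 1 = 4 * pi.
Proof.
have J2_00 : J2 0 0 = 2 * pi :> R.
  have dF x : is_derive x (1 : R) id (sin x ^+ 0 * cos x ^+ 0).
    by rewrite !expr0 mulr1; exact: is_derive_id.
  by have := Rintegral_is_derive twopi_gt0 (@continuous_sin_cos_pow R 0 0) dF; rewrite subr0.
have Jpi_10 : Jpi 1 0 = 2 :> R.
  by have := sincos_moment_parts 0 1 (pi_gt0 R); rewrite cospi expr0 expr1 /=; lra.
by rewrite -mpolyX0 sph_intX /sph_int_monomial /sph_moment !mnm0E J2_00 Jpi_10; ring.
Qed.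

End SphereIntegral.

Section HarmonicOnSphere.
Variable R : realType.
Local Notation P := (poly3 R).
Local Notation sph_int := (@sph_int R).
Implicit Types (p q : P).

Lemma sph_int_mgrad_dot k l p q : p \is k.-homog -> mlap p = 0 -> q \is l.-homog ->
  sph_int (mgrad_dot q p) = (k * (k + l + 1))%:R * sph_int (q * p).
Proof.
move=> hp lp hq.
have -> : mgrad_dot q p = \sum_i (q * p^`M(i))^`M(i) - q * mlap p.
  by rewrite /mlap mulr_sumr -sumrB; apply: eq_bigr => i _; rewrite mderivM addrK.
rewrite lp mulr0 subr0 (raddf_sum sph_int) /=.
under eq_bigr => i _ do rewrite (sph_int_mderiv i (dhomogM hq (dhomog_mderiv i hp))).
rewrite -mulr_sumr -(raddf_sum sph_int) /=.
have -> : \sum_i 'X_i * (q * p^`M(i)) = q * meuler p.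
  by rewrite /meuler mulr_sumr; apply: eq_bigr => i _; rewrite mulrCA.
rewrite (meuler_dhomog hp) -scalerAr linearZ /= mulrA -natrM.
by case: k {hp lp} => [|k]; rewrite ?muln0 //; congr (_%:R * _); lia.
Qed.

Lemma sph_int_harmonic_orth k l p q : p \is k.-homog -> mlap p = 0 ->
  q \is l.-homog -> mlap q = 0 -> k != l -> sph_int (q * p) = 0.
Proof.
move=> hp lp hq lq kl.
have := sph_int_mgrad_dot hq lq hp; rewrite mgrad_dotC (sph_int_mgrad_dot hp lp hq) (mulrC p q).
move/eqP; rewrite -subr_eq0 -mulrBl mulf_eq0 subr_eq0 eqr_nat => /orP[/eqP|/eqP //].
by move: kl => /negP; nia.
Qed.

End HarmonicOnSphere.

Section VectorFieldAlgebra.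
Variable R : comNzRingType.
Local Notation P := {mpoly R[3]}.
Implicit Types (v w : 'I_3 -> P).

Definition vdot v w : P := \sum_i v i * w i.
Definition xdot w : P := \sum_i 'X_i * w i.
Definition vdiv w : P := \sum_i (w i)^`M(i).
Definition Apoly w : 'I_3 -> P := fun l => 'X_l * vdiv w - \sum_j 'X_j * (w j)^`M(l).
(* On S^2, grad_T p . grad_T q = grad p . grad q - (x . grad p) (x . grad q). *)
Definition tgrad_dot v w : P := \sum_i (mgrad_dot (v i) (w i) - meuler (v i) * meuler (w i)).

Definition harmonic_field k w := forall i, w i \is k.-homog /\ mlap (w i) = 0.

Lemma vdotC v w : vdot v w = vdot w v.
Proof. by apply: eq_bigr => i _; rewrite mulrC. Qed.

Lemma dhomog_vdiv k w : (forall i, w i \is k.-homog) -> vdiv w \is k.-1.-homog.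
Proof. by move=> hw; rewrite rpred_sum // => i _; exact: dhomog_mderiv. Qed.

Lemma dhomog_xdot k w : (forall i, w i \is k.-homog) -> xdot w \is k.+1.-homog.
Proof. by move=> hw; rewrite rpred_sum // => i _; exact: dhomogXUM. Qed.

Lemma mlap_vdiv w : (forall i, mlap (w i) = 0) -> mlap (vdiv w) = 0.
Proof.
by move=> lw; rewrite /vdiv linear_sum big1 //= => i _; rewrite mlap_mderiv lw raddf0.
Qed.

Lemma mlap_xdot w : (forall i, mlap (w i) = 0) -> mlap (xdot w) = 2%:R *: vdiv w.
Proof.
move=> lw; rewrite /xdot linear_sum scaler_sumr /=; apply: eq_bigr => i _.
by rewrite mlapXUM lw mulr0 addr0.
Qed.

Lemma mderiv_xdot l w : (xdot w)^`M(l) = w l + \sum_j 'X_j * (w j)^`M(l).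
Proof.
rewrite /xdot linear_sum /=; under eq_bigr => j _ do rewrite mderivXUM eq_sym.
by rewrite big_split /= sum_delta_scale.
Qed.

Lemma vdot_Apoly v w :
  vdot v (Apoly w) = xdot v * vdiv w - \sum_l v l * \sum_j 'X_j * (w j)^`M(l).
Proof.
rewrite /vdot /Apoly /xdot mulr_suml -sumrB; apply: eq_bigr => l _.
by rewrite mulrBr mulrA (mulrC (v l)).
Qed.

Lemma harmonic_Apoly k w : (1 <= k)%N -> harmonic_field k w -> harmonic_field k (Apoly w).
Proof.
move=> k1 hw l; have hwi i := (hw i).1; have lwi i := (hw i).2; split.
  rewrite -[k]prednK // rpredB ?dhomogXUM ?dhomog_vdiv // rpred_sum // => j _.
  by rewrite dhomogXUM // dhomog_mderiv.
rewrite linearB /= mlapXUM mlap_vdiv // mulr0 addr0 (raddf_sum (@mlap 3 R)) /=.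
under eq_bigr => j _ do rewrite mlapXUM mlap_mderiv lwi raddf0 mulr0 addr0 mderiv_comm.
by rewrite -scaler_sumr -linear_sum subrr.
Qed.

Lemma vdiv_Apoly k w : (1 <= k)%N -> harmonic_field k w ->
  vdiv (Apoly w) = k.+1%:R *: vdiv w.
Proof.
case: k => [//|k] _ hw; have Ediv := meuler_dhomog (dhomog_vdiv (fun i => (hw i).1)).
have -> : vdiv (Apoly w) =
    \sum_l ('X_l * vdiv w)^`M(l) - \sum_l (\sum_j 'X_j * (w j)^`M(l))^`M(l).
  by rewrite -sumrB; apply: eq_bigr => l _; rewrite mderivB.
have -> : \sum_l ('X_l * vdiv w)^`M(l) = 3%:R *: vdiv w + meuler (vdiv w).
  under eq_bigr => l _ do rewrite mderivXUM eqxx scale1r.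
  by rewrite big_split /= sumr_const card_ord scaler_nat.
have -> : \sum_l (\sum_j 'X_j * (w j)^`M(l))^`M(l) = vdiv w.
  under eq_bigr => l _ do rewrite linear_sum /=.
  under eq_bigr => l _ do under eq_bigr => j _ do rewrite mderivXUM eq_sym.
  under eq_bigr => l _ do rewrite big_split /= sum_delta_scale.
  rewrite big_split /= [X in _ + X]exchange_big /= [X in _ + X]big1 ?addr0 // => j _.
  by rewrite -mulr_sumr -[X in _ * X]/(mlap (w j)) (hw j).2 mulr0.
rewrite Ediv -scalerDl -natrD (_ : (3 + k = k.+3)%N) // -natr1 scalerDl scale1r.
by rewrite addrK.
Qed.

End VectorFieldAlgebra.

Section VectorFieldsOnSphere.
Variable R : realType.
Local Notation P := (poly3 R).
Local Notation sph_int := (@sph_int R).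
Implicit Types (v w : 'I_3 -> P).

Lemma sph_int_tgrad_dot k l v w : (forall i, v i \is k.-homog) -> harmonic_field l w ->
  sph_int (tgrad_dot v w) = (l * l.+1)%:R * sph_int (vdot v w).
Proof.
move=> hv hw; rewrite (raddf_sum sph_int) (raddf_sum sph_int) mulr_sumr /=.
apply: eq_bigr => i _; have [hwi lwi] := hw i.
rewrite raddfB /= (sph_int_mgrad_dot hwi lwi (hv i)) (meuler_dhomog (hv i)).
rewrite (meuler_dhomog hwi) -scalerAl -scalerAr !sph_intZ mulrA -natrM -mulrBl -natrB.
  by congr (_%:R * _); lia.
by nia.
Qed.

Lemma sph_int_vdot_orth k l v w : harmonic_field k v -> harmonic_field l w -> k != l ->
  sph_int (vdot v w) = 0.
Proof.
move=> hv hw kl; rewrite (raddf_sum sph_int) big1 //= => i _.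
by rewrite (sph_int_harmonic_orth (hw i).1 (hw i).2 (hv i).1 (hv i).2) // eq_sym.
Qed.

Lemma sph_int_harmonic k p : (1 <= k)%N -> p \is k.-homog -> mlap p = 0 -> sph_int p = 0.
Proof.
move=> k1 hp lp; rewrite -[p]mul1r (sph_int_harmonic_orth hp lp (dhomog1 _ _) (mlap1 _ _)) //.
by rewrite -lt0n.
Qed.

Lemma sph_int_vdot_Apoly k v w : (forall i, v i \is k.-homog) -> (forall i, w i \is k.-homog) ->
  sph_int (vdot v (Apoly w)) = sph_int (xdot v * vdiv w + vdiv v * xdot w + vdot v w)
    - (2 * k + 3)%:R * sph_int (xdot v * xdot w).
Proof.
move=> hv hw; pose S := \sum_l v l * \sum_j 'X_j * (w j)^`M(l).
have parts : sph_int (\sum_l (v l * xdot w)^`M(l)) = (2 * k + 3)%:R * sph_int (xdot v * xdot w).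
  rewrite [xdot v]/xdot mulr_suml (raddf_sum sph_int) (raddf_sum sph_int) mulr_sumr /=.
  apply: eq_bigr => l _; rewrite (sph_int_mderiv l (dhomogM (hv l) (dhomog_xdot hw))) mulrA.
  by congr (_%:R * _); lia.
have split_parts : \sum_l (v l * xdot w)^`M(l) = vdiv v * xdot w + vdot v w + S.
  rewrite /vdiv mulr_suml /vdot /S -addrA -big_split -big_split /=.
  by apply/eq_bigr => l _; rewrite mderivM mderiv_xdot mulrDr.
have intS : sph_int S = (2 * k + 3)%:R * sph_int (xdot v * xdot w)
    - sph_int (vdiv v * xdot w + vdot v w).
  by rewrite -parts split_parts raddfD /=; ring.
by rewrite vdot_Apoly -/S raddfB /= intS !raddfD /=; ring.
Qed.

Lemma sph_int_vdot_Apoly_sym k v w :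
  (forall i, v i \is k.-homog) -> (forall i, w i \is k.-homog) ->
  sph_int (vdot v (Apoly w)) = sph_int (vdot w (Apoly v)).
Proof.
move=> hv hw; rewrite (sph_int_vdot_Apoly hv hw) (sph_int_vdot_Apoly hw hv).
rewrite vdotC (mulrC (xdot w) (vdiv v)) (mulrC (vdiv w)) (mulrC (xdot w) (xdot v)).
by rewrite (addrC (vdiv v * _)).
Qed.

End VectorFieldsOnSphere.

Section SphereMeans.
Variable R : realType.
Local Notation P := (poly3 R).
Local Notation sph_int := (@sph_int R).
Implicit Types (p : P) (v w : 'I_3 -> P) (x : pt R).

Lemma on_sphere_sph (t f : R) : on_sphere (sph t f).
Proof.
rewrite /on_sphere /dot !big_ord_recl big_ord0 /sph /=.
transitivity (sin t ^+ 2 * (cos f ^+ 2 + sin f ^+ 2) + cos t ^+ 2); first ring.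
by rewrite cos2Dsin2 mulr1 addrC cos2Dsin2.
Qed.

Lemma sph_int1_neq0 : sph_int 1 != 0.
Proof. by rewrite sph_int1 mulf_neq0 // gt_eqF // pi_gt0. Qed.

Lemma Av_sph_int (g : pt R -> R) p : (forall x, on_sphere x -> g x = ev p x) ->
  Av g = sph_int p / sph_int 1.
Proof.
move=> gp; rewrite -!sint_ev /Av /sint.
congr (_ / _); last by congr Rintegral; apply/funext => f; congr Rintegral;
  apply/funext => t; rewrite /ev meval1.
congr Rintegral; apply/funext => f; congr Rintegral; apply/funext => t.
by rewrite gp //; exact: on_sphere_sph.
Qed.

Lemma ev_sum (I : Type) (s : seq I) (F : I -> P) x :
  ev (\sum_(i <- s) F i) x = \sum_(i <- s) ev (F i) x.
Proof. exact: raddf_sum. Qed.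

Lemma ev_vdot v w x : ev (vdot v w) x = dot (evv v x) (evv w x).
Proof. by rewrite ev_sum; apply: eq_bigr => i _; rewrite /ev mevalM. Qed.

Lemma ev_xdot w x : ev (xdot w) x = dot (evv w x) x.
Proof. by rewrite ev_sum; apply: eq_bigr => i _; rewrite /ev mevalM mevalXU mulrC. Qed.

Lemma ev_vdiv w x : ev (vdiv w) x = \sum_i ev (d i (w i)) x.
Proof. exact: ev_sum. Qed.

Lemma ev_Apoly w x l : ev (Apoly w l) x = Aop w x l.
Proof.
rewrite /Aop /Apoly /divS /gradT /grad /dot /ev mevalB mevalM mevalXU.
rewrite (raddf_sum (meval x)) (raddf_sum (meval x)) /=.
by rewrite !big_ord_recl !big_ord0 /= !mevalM !mevalXU /d; ring.
Qed.

Lemma ev_mgrad_dot p q x : ev (mgrad_dot p q) x = dot (grad p x) (grad q x).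
Proof. by rewrite ev_sum; apply: eq_bigr => j _; rewrite /ev mevalM. Qed.

Lemma ev_meuler p x : ev (meuler p) x = dot x (grad p x).
Proof. by rewrite ev_sum; apply: eq_bigr => j _; rewrite /ev mevalM mevalXU. Qed.

Lemma dot_gradT p q x : on_sphere x ->
  dot (gradT p x) (gradT q x) = dot (grad p x) (grad q x) - dot x (grad p x) * dot x (grad q x).
Proof.
rewrite /on_sphere => x1.
transitivity (dot (grad p x) (grad q x) - dot x (grad p x) * dot x (grad q x)
  + dot x (grad p x) * dot x (grad q x) * (dot x x - 1)).
  by rewrite /gradT /dot !big_ord_recl !big_ord0; ring.
by rewrite x1 subrr mulr0 addr0.
Qed.

Lemma ev_tgrad_dot v w x : on_sphere x -> ev (tgrad_dot v w) x = gradT_dot v w x.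
Proof.
move=> x1; rewrite ev_sum; apply: eq_bigr => i _.
by rewrite /ev mevalB mevalM -!/(ev _ x) ev_mgrad_dot !ev_meuler dot_gradT.
Qed.

Lemma ev_vdot_Apoly v w x : ev (vdot v (Apoly w)) x = dot (evv v x) (Aop w x).
Proof. by rewrite ev_vdot; congr dot; apply/funext => l; rewrite /evv ev_Apoly. Qed.

Lemma QV3E v w : QV3 v w = 3 / 2 * (sph_int (vdot v (Apoly w)) / sph_int 1).
Proof.
by rewrite /QV3 (@Av_sph_int _ (vdot v (Apoly w))) // => x _; rewrite ev_vdot_Apoly.
Qed.

Lemma Av_gradT_dot v w : Av (gradT_dot v w) = sph_int (tgrad_dot v w) / sph_int 1.
Proof. by apply: Av_sph_int => x x1; rewrite ev_tgrad_dot. Qed.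

Lemma Q3E v w : Q3 v w = 3 / 4 * (sph_int (tgrad_dot v w) / sph_int 1) - QV3 v w.
Proof. by rewrite /Q3 Av_gradT_dot. Qed.

Lemma W12E v w : W12 v w = (sph_int (vdot v w) + sph_int (tgrad_dot v w)) / sph_int 1.
Proof.
rewrite /W12 Av_gradT_dot (@Av_sph_int _ (vdot v w)) ?mulrDl // => x _.
by rewrite ev_vdot.
Qed.

End SphereMeans.

Section QuadraticFormsOnH3k.
Variable R : realType.
Local Notation P := (poly3 R).
Local Notation sph_int := (@sph_int R).
Implicit Types (p : P) (u v w : 'I_3 -> P).

Lemma homog_degE k p : homog_deg k p <-> p \is k.-homog.
Proof.
split => [hp|/dhomogP hp m].
  by apply/dhomogP => m; rewrite mcoeff_msupp; exact: hp.
by rewrite -mcoeff_msupp; exact: hp.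
Qed.

Lemma H3k_harmonic k w : H3k k w -> harmonic_field k w.
Proof. by case=> hw _ i; have [/homog_degE] := hw i. Qed.

Lemma H3k_sol_solenoidal k u : (1 <= k)%N -> harmonic_field k u -> vdiv u = 0 ->
  H3k_sol k u.
Proof.
move=> k1 hu du; split; last by move=> x _; rewrite -ev_vdiv du /ev meval0.
split; first by move=> i; split; [apply/homog_degE; exact: (hu i).1 | exact: (hu i).2].
split.
  move=> i; rewrite (@Av_sph_int _ _ (u i)) // (sph_int_harmonic k1 (hu i).1 (hu i).2).
  by rewrite mul0r.
rewrite (@Av_sph_int _ _ (xdot u)) => [|x _]; last by rewrite ev_xdot.
rewrite (@sph_int_harmonic _ k.+1) ?mul0r ?dhomog_xdot //; first by move=> i; exact: (hu i).1.
by rewrite mlap_xdot ?du ?scaler0 // => i; exact: (hu i).2.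
Qed.

Definition sph_eigen (lam : R) v :=
  forall u, sph_int (vdot u (Apoly v)) = lam * sph_int (vdot u v).

Lemma sph_eigen_Aop lam v :
  (forall x, on_sphere x -> forall l, Aop v x l = lam * evv v x l) -> sph_eigen lam v.
Proof.
move=> hA u; pose g x := dot (evv u x) (Aop v x).
have e1 : Av g = sph_int (vdot u (Apoly v)) / sph_int 1.
  by apply: Av_sph_int => x _; rewrite ev_vdot_Apoly.
have e2 : Av g = sph_int (lam *: vdot u v) / sph_int 1.
  apply: Av_sph_int => x x1; rewrite /ev mevalZ -/(ev _ x) ev_vdot /g /dot mulr_sumr.
  by apply: eq_bigr => i _; rewrite hA // mulrCA.
by apply: (mulIf (invr_neq0 (sph_int1_neq0 R))); rewrite -e1 e2 sph_intZ.
Qed.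

Lemma H3k3_orth_sol k u v : H3k_sol k u -> H3ki k 3 v -> sph_int (vdot u v) = 0.
Proof.
move=> su [Hv orth_v]; have := orth_v u su.
rewrite W12E (sph_int_tgrad_dot (fun i => (H3k_harmonic su.1 i).1) (H3k_harmonic Hv)).
move/eqP; rewrite mulf_eq0 invr_eq0 (negbTE (sph_int1_neq0 R)) orbF.
by rewrite -[X in X + _]mul1r -mulrDl nat1r mulf_eq0 pnatr_eq0 => /eqP.
Qed.

Lemma H3k_sol_Apoly_sub k w : (1 <= k)%N -> harmonic_field k w ->
  H3k_sol k (fun l => Apoly w l - k.+1%:R *: w l).
Proof.
move=> k1 hw; apply: H3k_sol_solenoidal => // [l|].
  have [hA lA] := harmonic_Apoly k1 hw l; have [hwl lwl] := hw l.
  by rewrite rpredB ?rpredZ // linearB linearZ /= lA lwl scaler0 subr0.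
rewrite /vdiv; under eq_bigr => l _ do rewrite mderivB mderivZ.
by rewrite sumrB -scaler_sumr -/(vdiv _) -/(vdiv _) (vdiv_Apoly k1 hw) subrr.
Qed.

Lemma sph_int_vdot_Apoly_H3k3 k w : (1 <= k)%N -> H3ki k 3 w ->
  sph_int (vdot w (Apoly w)) = k.+1%:R * sph_int (vdot w w).
Proof.
move=> k1 Hw; have := H3k3_orth_sol (H3k_sol_Apoly_sub k1 (H3k_harmonic Hw.1)) Hw.
rewrite (_ : vdot _ w = vdot (Apoly w) w - k.+1%:R *: vdot w w); last first.
  by rewrite /vdot scaler_sumr -sumrB; apply: eq_bigr => i _; rewrite mulrBl scalerAl.
by rewrite raddfB /= sph_intZ vdotC => /eqP; rewrite subr_eq0 => /eqP.
Qed.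

Definition H3k_eigenvalue k i : R :=
  match i with 1 => - k%:R | 2 => 1 | _ => k.+1%:R end.

Lemma H3ki_harmonic k i w : (1 <= i <= 3)%N -> H3ki k i w -> harmonic_field k w.
Proof.
case/andP; case: i => [|[|[|[|i]]]] //= _ _ => [[[hw _] _]|[[hw _] _]|[hw _]];
  exact: H3k_harmonic hw.
Qed.

Lemma H3ki_sph_eigen k i v : (i = 1 \/ i = 2)%N -> H3ki k i v ->
  H3k_sol k v /\ sph_eigen (H3k_eigenvalue k i) v.
Proof.
by case=> -> [sv hA]; split => //; apply: sph_eigen_Aop => x x1 l; rewrite hA ?mul1r.
Qed.

Lemma H3ki_self_eigen k i w : (1 <= k)%N -> (1 <= i <= 3)%N -> H3ki k i w ->
  sph_int (vdot w (Apoly w)) = H3k_eigenvalue k i * sph_int (vdot w w).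
Proof.
move=> k1 /andP[]; case: i => [|[|[|[|i]]]] //= _ _ hw.
- exact: (H3ki_sph_eigen (or_introl erefl) hw).2.
- exact: (H3ki_sph_eigen (or_intror erefl) hw).2.
- exact: sph_int_vdot_Apoly_H3k3.
Qed.

Lemma QV3_Q3_eigen k (lam : R) w : (1 <= k)%N -> harmonic_field k w ->
  sph_int (vdot w (Apoly w)) = lam * sph_int (vdot w w) ->
  QV3 w w = 3 / 2 * lam / (k * k.+1)%:R * Av (gradT_dot w w) /\
  Q3 w w = (3 / 4 - 3 / 2 * lam / (k * k.+1)%:R) * Av (gradT_dot w w).
Proof.
move=> k1 hw eig.
have QV3w : QV3 w w = 3 / 2 * lam / (k * k.+1)%:R * Av (gradT_dot w w).
  rewrite QV3E Av_gradT_dot (sph_int_tgrad_dot (fun i => (hw i).1) hw) eig.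
  by field; rewrite (sph_int1_neq0 R) nat1r !pnatr_eq0 /=; lia.
by split=> //; rewrite /Q3 QV3w mulrBl.
Qed.

Lemma QV3_Q3_eq0 k l v w : (forall i, v i \is k.-homog) -> harmonic_field l w ->
  sph_int (vdot v w) = 0 -> sph_int (vdot v (Apoly w)) = 0 -> QV3 v w = 0 /\ Q3 v w = 0.
Proof.
move=> hv hw vw0 vAw0; have QV3vw : QV3 v w = 0 by rewrite QV3E vAw0 mul0r mulr0.
by split=> //; rewrite Q3E QV3vw (sph_int_tgrad_dot hv hw) vw0 !mulr0 mul0r mulr0 subr0.
Qed.

Lemma sph_eigen_orth k (lam mu : R) v w : lam != mu ->
  (forall i, v i \is k.-homog) -> (forall i, w i \is k.-homog) ->
  sph_eigen lam v -> sph_eigen mu w -> sph_int (vdot v w) = 0.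
Proof.
move=> lam_mu hv hw ev ew; apply/eqP; apply: contraNT lam_mu => vw0; apply/eqP.
apply: (mulIf vw0).
by rewrite {1}(vdotC v w) -ev -ew (sph_int_vdot_Apoly_sym hw hv).
Qed.

Lemma sph_int_vdot_Apoly_eq0 k v w :
  (forall i, v i \is k.-homog) -> (forall i, w i \is k.-homog) ->
  sph_int (vdot v w) = 0 ->
  (exists lam, sph_eigen lam v) \/ (exists mu, sph_eigen mu w) ->
  sph_int (vdot v (Apoly w)) = 0.
Proof.
move=> hv hw vw0 [[lam ev]|[mu ew]]; last by rewrite ew vw0 mulr0.
by rewrite (sph_int_vdot_Apoly_sym hv hw) ev vdotC vw0 mulr0.
Qed.

Lemma H3ki_same_degree_orth k i j v w : (1 <= i <= 3)%N -> (1 <= j <= 3)%N -> i != j ->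
  H3ki k i v -> H3ki k j w -> sph_int (vdot v w) = 0 /\ sph_int (vdot v (Apoly w)) = 0.
Proof.
move=> hi hj ij Hv Hw.
have hv l := (H3ki_harmonic hi Hv l).1; have hw l := (H3ki_harmonic hj Hw l).1.
suff [vw0 eig] : sph_int (vdot v w) = 0 /\
    ((exists lam, sph_eigen lam v) \/ (exists mu, sph_eigen mu w)).
  by split=> //; exact: sph_int_vdot_Apoly_eq0 hv hw vw0 eig.
have eig12 : - k%:R != 1 :> R by rewrite -subr_eq0 -opprD oppr_eq0 natr1 pnatr_eq0.
case: i hi ij Hv => [|[|[|[|i]]]] //= _; case: j hj Hw => [|[|[|[|j]]]] //= _ Hw _ Hv.
- have [_ ev] := H3ki_sph_eigen (or_introl erefl) Hv.
  have [_ ew] := H3ki_sph_eigen (or_intror erefl) Hw.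
  by split; [exact: sph_eigen_orth eig12 hv hw ev ew | left; exists (- k%:R)].
- have [sv ev] := H3ki_sph_eigen (or_introl erefl) Hv.
  by split; [exact: H3k3_orth_sol sv Hw | left; exists (- k%:R)].
- have [_ ev] := H3ki_sph_eigen (or_intror erefl) Hv.
  have [_ ew] := H3ki_sph_eigen (or_introl erefl) Hw.
  by split; [apply: sph_eigen_orth _ hv hw ev ew; rewrite eq_sym | left; exists 1].
- have [sv ev] := H3ki_sph_eigen (or_intror erefl) Hv.
  by split; [exact: H3k3_orth_sol sv Hw | left; exists 1].
- have [sw ew] := H3ki_sph_eigen (or_introl erefl) Hw.
  by split; [rewrite vdotC; exact: H3k3_orth_sol sw Hv | right; exists (- k%:R)].
- have [sw ew] := H3ki_sph_eigen (or_intror erefl) Hw.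
  by split; [rewrite vdotC; exact: H3k3_orth_sol sw Hv | right; exists 1].
Qed.

Lemma H3ki_QV3_Q3 k i : (1 <= k)%N -> (1 <= i <= 3)%N ->
  exists c C : R, forall w : vfield R, H3ki k i w ->
    QV3 w w = c * Av (gradT_dot w w) /\ Q3 w w = C * Av (gradT_dot w w).
Proof.
move=> k1 hi; pose c := 3 / 2 * H3k_eigenvalue k i / (k * k.+1)%:R.
exists c, (3 / 4 - c) => w hw.
exact: QV3_Q3_eigen k1 (H3ki_harmonic hi hw) (H3ki_self_eigen k1 hi hw).
Qed.

Lemma H3ki_QV3_Q3_orth k l i j : (1 <= k)%N -> (1 <= l)%N ->
  (1 <= i <= 3)%N -> (1 <= j <= 3)%N -> (k, i) <> (l, j) ->
  forall v w : vfield R, H3ki k i v -> H3ki l j w -> QV3 v w = 0 /\ Q3 v w = 0.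
Proof.
move=> k1 l1 hi hj kilj v w Hv Hw.
have hv := H3ki_harmonic hi Hv; have hw := H3ki_harmonic hj Hw.
suff [vw0 vAw0] : sph_int (vdot v w) = 0 /\ sph_int (vdot v (Apoly w)) = 0.
  exact: QV3_Q3_eq0 (fun i => (hv i).1) hw vw0 vAw0.
have [ekl|kl] := eqVneq k l; last first.
  by rewrite (sph_int_vdot_orth hv hw kl) (sph_int_vdot_orth hv (harmonic_Apoly l1 hw) kl).
subst l; apply: H3ki_same_degree_orth hi hj _ Hv Hw.
by apply/eqP => eij; apply: kilj; rewrite eij.
Qed.

End QuadraticFormsOnH3k.

Theorem lemma4p9 (R : realType) :
  (forall (k i : nat), (1 <= k)%N -> (1 <= i <= 3)%N ->
     exists c C : R, forall w : vfield R, H3ki k i w ->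
       QV3 w w = c * Av (gradT_dot w w) /\
       Q3 w w = C * Av (gradT_dot w w)) /\
  (forall (k l i j : nat), (1 <= k)%N -> (1 <= l)%N ->
     (1 <= i <= 3)%N -> (1 <= j <= 3)%N -> (k, i) <> (l, j) ->
     forall wki wlj : vfield R, H3ki k i wki -> H3ki l j wlj ->
       QV3 wki wlj = 0 /\ Q3 wki wlj = 0).
Proof. by split; [exact: H3ki_QV3_Q3 | exact: H3ki_QV3_Q3_orth]. Qed.
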